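(* Let $G$ be a connected non-bipartite graph and $\phi$ a sub-additive admissible matching policy. Then every word $u\in\mathbb W_2$ admits an erasing word for $(G,\phi)$, i.e. there is $z\in\mathcal V^*$ of even length such that for all $\varsigma'\in\mathcal S^*$ with $|\varsigma'|=|z|$ and all $\varsigma\in\mathcal S^*$ with $|\varsigma|=|u|$, both having letters in the support of $\nu_\phi$, we have $Q_\phi(z,\varsigma')=\emptyset$ and $Q_\phi(uz,\varsigma\varsigma')=\emptyset$.
   Context: $G=(\mathcal V,\mathcal E)$ is a finite connected simple graph, $i - j$ denotes adjacency. A list of preferences $\sigma\in\mathcal S$ gives for each class $i$ a linear ordering of its neighbours; the policy $\phi$ comes with a probability $\nu_\phi$ on $\mathcal S$. $\mathbb W=\{w\in\mathcal V^*:|w|_i|w|_j=0 \text{ whenever } i - j\}$ and $\mathbb W_2$ is the set of words of $\mathbb W$ of even length. $\phi$ is admissible if there is a map $\odot_\phi:\mathbb W\times(\mathcal V\times\mathcal S)\to\mathbb W$ with $w\odot_\phi(v,\sigma)=wv$ if no letter of $w$ is adjacent to $v$, and otherwise $w$ with one letter adjacent to $v$ (chosen by $\phi$ as a function of $w,v,\sigma$) deleted. For $z=z_1\cdots z_k$, $\varsigma=\varsigma_1\cdots\varsigma_k$, $Q_\phi(z,\varsigma)=(\cdots(\emptyset\odot_\phi(z_1,\varsigma_1))\cdots)\odot_\phi(z_k,\varsigma_k)$. $\phi$ is sub-additive if $|Q_\phi(z'z'',\varsigma'\varsigma'')|\le|Q_\phi(z',\varsigma')|+|Q_\phi(z'',\varsigma'')|$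 for all words $z',z''$ and preference words $\varsigma',\varsigma''$ of matching lengths with letters in the support of $\nu_\phi$. *)

From Stdlib Require List.
From mathcomp Require Import all_boot.
Set Implicit Arguments. Unset Strict Implicit. Unset Printing Implicit Defensive.

Definition simple_graph (T : finType) (e : rel T) : Prop :=
  symmetric e /\ irreflexive e.

Definition connected_graph (T : finType) (e : rel T) : Prop :=
  forall x y : T, connect e x y.

Definition bipartite (T : finType) (e : rel T) : Prop :=
  exists c : T -> bool, forall x y, e x y -> c x != c y.

(* A list of preferences: for each class i, a linear ordering (a duplicate-free
   list) of exactly the neighbours of i. *)
Definition pref (T : Type) := T -> seq T.

Definition is_pref (T : finType) (e : rel T) (s : pref T) : Prop :=
  forall i, uniq (s i) /\ (forall j, (j \in s i) = e i j).

(* The set W of admissible words: no two adjacent classes both occur. *)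
Definition in_W (T : finType) (e : rel T) (w : seq T) : Prop :=
  forall i j, e i j -> count_mem i w * count_mem j w = 0.

Definition admissible (T : finType) (e : rel T)
    (op : seq T -> T -> pref T -> seq T) : Prop :=
  forall (w : seq T) (v : T) (s : pref T), in_W e w -> is_pref e s ->
    (~~ has (e v) w -> op w v s = rcons w v) /\
    (has (e v) w -> exists2 k, k < size w &
        e (nth v w k) v /\ op w v s = take k w ++ drop k.+1 w).

Definition Q (T : Type) (op : seq T -> T -> pref T -> seq T)
    (z : seq T) (ss : seq (pref T)) : seq T :=
  foldl (fun w p => op w p.1 p.2) [::] (zip z ss).

Definition subadditive (T : finType) (op : seq T -> T -> pref T -> seq T)
    (supp : pref T -> Prop) : Prop :=
  forall (z1 z2 : seq T) (s1 s2 : seq (pref T)),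
    size s1 = size z1 -> size s2 = size z2 ->
    List.Forall supp s1 -> List.Forall supp s2 ->
    size (Q op (z1 ++ z2) (s1 ++ s2)) <= size (Q op z1 s1) + size (Q op z2 s2).

From Stdlib Require List.
From mathcomp Require Import all_boot.
From mathcomp Require Import zify.
Set Implicit Arguments. Unset Strict Implicit. Unset Printing Implicit Defensive.

(* Run u and the empty word in parallel, keeping track of the pair of reached
   words only up to permutation.  Reading K copies of a letter y from a word
   with at most K neighbours of y erases all these neighbours and leaves the
   remaining copies of y, whatever the policy and the preferences; taking for K
   the larger of the two neighbour counts keeps the two words disjoint and their
   total length even.  Walking along paths of the connected graph with such
   steps, the set of letters occurring in the pair shrinks until a single pile
   of 2b copies of one letter is left, and such a pile can be moved to any
   vertex.  Non-bipartiteness gives an odd cycle p0 p1 ... x in which p0 sees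
   only p1 and x: reading b copies of p0 splits a pile of p1's into b p1's and
   b p0's lying in different words, the p1-pile then travels along the cycle
   up to a neighbour of x while the p0-pile stays, and b copies of x erase
   both.  The parity of the erasing word follows from the run from the empty
   word. *)

Section OddCycle.
Variables (T : finType) (e : rel T).
Hypotheses (e_sym : symmetric e) (e_irr : irreflexive e).

(* The cycle p0 p1 r x has odd length size r + 3, and p0 is adjacent to no letter of r. *)
Definition pinned_odd_cycle (p0 p1 : T) (r : seq T) (x : T) :=
  [/\ path e p0 (p1 :: r), e (last p1 r) x, e x p0, ~~ odd (size r)
    & all (fun w => ~~ e w p0) r].

Lemma pinned_odd_cycle_of_cycle (c : seq T) : cycle e c -> odd (size c) ->
  exists p0 p1 r x, pinned_odd_cycle p0 p1 r x.
Proof.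
have [n] := ubnP (size c); elim: n c => // n IH [|p0 [|p1 q]] //=; first by rewrite e_irr.
case/lastP: q => [|r x] // size_c.
rewrite rcons_path last_rcons rcons_path => /andP[e01 /andP[/andP[p1r erx] ex0]].
rewrite size_rcons negbK => even_r.
have [r_p0|] := boolP (all (fun w => ~~ e w p0) r).
  by exists p0, p1, r, x; split; rewrite //= e01.
case/allPn=> w w_r; rewrite negbK => ew0.
case/splitPr: w_r p1r erx even_r size_c => r1 r2.
rewrite cat_path last_cat /= => /and3P[p1r1 e_r1w wr2] erx.
rewrite size_cat /= size_rcons size_cat /= => even_r size_c.
(* The chord p0 w splits the cycle into two shorter ones, one of which is odd. *)
case odd_r1: (odd (size r1)).
- apply: (IH (p0 :: w :: rcons r2 x)); rewrite /= ?size_rcons; first lia.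
    by rewrite rcons_path last_rcons rcons_path /= e_sym ew0 wr2 erx ex0.
  by move: even_r; rewrite addnS /= oddD odd_r1.
- apply: (IH (p0 :: p1 :: rcons r1 w)); rewrite /= ?size_rcons /= ?odd_r1 //; first lia.
  by rewrite rcons_path last_rcons rcons_path /= e01 p1r1 e_r1w ew0.
Qed.

Definition cover_rel (p q : T * bool) := e p.1 q.1 && (q.2 == ~~ p.2).

Lemma cover_rel_sym : symmetric cover_rel.
Proof. by case=> a b [c d]; rewrite /cover_rel /= e_sym; case: b; case: d. Qed.

Lemma connect_cover_path p a b :
  path e a p -> connect cover_rel (a, b) (last a p, b (+) odd (size p)).
Proof.
elim: p a b => [|y p IH] a b /=; first by rewrite addbF => _; apply: connect0.
case/andP=> e_ay p_y; apply: connect_trans (connect1 (_ : cover_rel _ (y, ~~ b))) _.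
  by rewrite /cover_rel /= e_ay eqxx.
by rewrite addbN -addNb; apply: IH.
Qed.

Lemma cover_path_proj q a b : path cover_rel (a, b) q ->
  [/\ path e a (map fst q), last a (map fst q) = (last (a, b) q).1
    & (last (a, b) q).2 = b (+) odd (size q)].
Proof.
elim: q a b => [|[c d] q IH] a b /=; first by rewrite addbF.
case/andP=> /andP[/= e_ac /eqP->] /IH[p_q last_q bit_q].
by rewrite e_ac p_q last_q bit_q addNb addbN.
Qed.

Lemma odd_cycle_of_cover y :
  connect cover_rel (y, false) (y, true) -> exists c, cycle e c && odd (size c).
Proof.
case/connectP=> q /cover_path_proj[p_q] + + last_q; rewrite -last_q /=.
rewrite -(size_map fst); case/lastP: (map fst q) p_q => [|p y'] //.
rewrite last_rcons size_rcons /= => p_y y_y' odd_p; subst y'.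
by exists (y :: p); rewrite /= p_y -odd_p.
Qed.

Lemma odd_cycle_of_nonbipartite :
  connected_graph e -> ~ bipartite e -> exists c, cycle e c && odd (size c).
Proof.
move=> conn_e nbip.
have [y /odd_cycle_of_cover //|no_odd] :=
  pickP (fun y => connect cover_rel (y, false) (y, true)).
case: nbip; have [a _|T0] := pickP (@predT T); last by exists xpredT => x; have := T0 x.
have cover_sym := sym_connect_sym cover_rel_sym.
have bit_uniq z b : connect cover_rel (a, false) (z, b) ->
    connect cover_rel (a, false) (z, false) = ~~ b.
  case: b => // az1; apply/negP => az0; have := no_odd z.
  by rewrite /= (connect_trans _ az1) // cover_sym.
exists (fun x => connect cover_rel (a, false) (x, false)) => x y e_xy.
case/connectP: (conn_e a x) => p /(connect_cover_path false) + lx.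
rewrite -lx /= => a_x.
have a_y : connect cover_rel (a, false) (y, ~~ odd (size p)).
  by apply: connect_trans a_x (connect1 _); rewrite /cover_rel /= e_xy eqxx.
by rewrite (bit_uniq _ _ a_x) (bit_uniq _ _ a_y) negbK; case: (odd _).
Qed.

End OddCycle.

Lemma count_eq0 (A : Type) (a : pred A) (s : seq A) : (count a s == 0) = ~~ has a s.
Proof. by rewrite has_count -leqNgt leqn0. Qed.

Lemma card_sub_setDU1 (T : finType) (U N S : {set T}) (p : T) :
  S \subset (U :\: N) :|: [set p] -> p \notin N ->
  #|S| + #|U :&: N| <= #|U| + ((p \in S) && (p \notin U)).
Proof.
move=> sub pN; rewrite -(cardsID N U) addnC -addnA leq_add2l.
have [_|] := boolP ((p \in S) && (p \notin U)).
  apply: leq_trans (subset_leq_card sub) _.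
  by rewrite setUC cardsU1 addnC leq_add2l leq_b1.
rewrite negb_and negbK addn0 => pSU; apply/subset_leq_card/subsetP => s sS.
move/subsetP/(_ s sS): sub; rewrite !inE => /orP[//|/eqP sp]; subst s.
by move: pSU; rewrite sS /= => ->; rewrite andbT.
Qed.

Section Matching.
Variables (T : finType) (e : rel T).
Hypotheses (e_sym : symmetric e) (e_irr : irreflexive e).

Lemma in_W_mem w : in_W e w <-> {in w &, forall i j, ~~ e i j}.
Proof.
split=> [w_W i j iw jw|w_W i j eij]; last first.
  apply/eqP; rewrite muln_eq0.
  have [iw|/count_memPn->] := boolP (i \in w); last by [].
  have [jw|/count_memPn->] := boolP (j \in w); last by rewrite orbT.
  by have := w_W i j iw jw; rewrite eij.
apply/negP => eij; move/eqP: (w_W i j eij).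
by rewrite muln_eq0 => /orP[] /eqP /count_memPn; rewrite ?iw ?jw.
Qed.

Lemma in_W_sub w w' : {subset w' <= w} -> in_W e w -> in_W e w'.
Proof. by move=> sub /in_W_mem w_W; apply/in_W_mem => i j /sub iw /sub; apply: w_W. Qed.

Lemma in_W_perm w w' : perm_eq w w' -> in_W e w -> in_W e w'.
Proof. by move=> /perm_mem eq_ww'; apply: in_W_sub => i; rewrite eq_ww'. Qed.

Lemma in_W_take_drop w k : in_W e w -> in_W e (take k w ++ drop k.+1 w).
Proof.
by apply: in_W_sub => i; rewrite mem_cat => /orP[/mem_take|/mem_drop].
Qed.

Lemma count_adj_in_W w y : in_W e w -> y \in w -> count (e y) w = 0.
Proof.
move=> /in_W_mem w_W yw; apply/eqP; rewrite -leqn0 leqNgt -has_count.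
by apply/hasPn => j jw; apply: w_W.
Qed.

Definition feed (y : T) (K : nat) (w : seq T) :=
  filter (predC (e y)) w ++ nseq (K - count (e y) w) y.

Lemma mem_feed y K w x :
  x \in feed y K w = ((x \in w) && ~~ e y x) || ((x == y) && (count (e y) w < K)).
Proof. by rewrite mem_cat mem_filter mem_nseq subn_gt0 andbC [_ && (_ == _)]andbC. Qed.

Lemma in_W_feed y K w : in_W e w -> in_W e (feed y K w).
Proof.
move=> /in_W_mem w_W; apply/in_W_mem => i j; rewrite !mem_feed.
case/orP=> [/andP[iw yi]|/andP[/eqP-> _]]; case/orP=> [/andP[jw yj]|/andP[/eqP-> _]].
- exact: w_W.
- by rewrite e_sym.
- exact: yj.
- by rewrite e_irr.
Qed.

Lemma feed_perm y K w w' : perm_eq w w' -> perm_eq (feed y K w) (feed y K w').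
Proof.
move=> eq_ww'; rewrite /feed; have -> : count (e y) w = count (e y) w' by apply/permP.
by rewrite perm_cat2r perm_filter.
Qed.

Lemma feed_free y K w : ~~ has (e y) w -> feed y K w = w ++ nseq K y.
Proof.
move=> free; rewrite /feed; have /all_filterP-> : all (predC (e y)) w by rewrite all_predC.
by rewrite (eqP (_ : count _ w == 0)) ?count_eq0 // subn0.
Qed.

Lemma feed_adj y K a w : e y a -> feed y K.+1 (a :: w) = feed y K w.
Proof. by move=> ya; rewrite /feed /= ya. Qed.

Lemma feed_cat y K u w :
  feed y K (u ++ w) = filter (predC (e y)) u ++ feed y (K - count (e y) u) w.
Proof. by rewrite /feed filter_cat count_cat subnDA catA. Qed.

Lemma feed_nseq y K n v :
  feed y K (nseq n v) = if e y v then nseq (K - n) y else nseq n v ++ nseq K y.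
Proof.
rewrite /feed count_nseq filter_nseq /=; case: (e y v); rewrite ?mul1n ?mul0n //.
by rewrite subn0.
Qed.

Lemma size_feed y K w : count (e y) w <= K ->
  size (feed y K w) + (count (e y) w).*2 = size w + K.
Proof.
move=> cnt; rewrite size_cat size_filter size_nseq -(count_predC (e y) w) -addnn.
lia.
Qed.

Lemma feed_nil y K : feed y K [::] = nseq K y.
Proof. by rewrite /feed subn0. Qed.

Lemma in_W_nil : in_W e [::].
Proof. by []. Qed.

Lemma in_W_nseq n v : in_W e (nseq n v).
Proof. by rewrite -(feed_nil v); apply: in_W_feed. Qed.

Lemma in_W_rcons w v : in_W e w -> ~~ has (e v) w -> in_W e (rcons w v).
Proof. by move=> w_W free; rewrite -cats1 -(feed_free 1 free); apply: in_W_feed. Qed.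

Variables (op : seq T -> T -> pref T -> seq T) (supp : pref T -> Prop).
Hypotheses (supp_pref : forall s, supp s -> is_pref e s) (op_adm : admissible e op).

Definition run (w z : seq T) (ss : seq (pref T)) :=
  foldl (fun w p => op w p.1 p.2) w (zip z ss).

Lemma run_cons w v z s ss : run w (v :: z) (s :: ss) = run (op w v s) z ss.
Proof. by []. Qed.

Lemma run_cat w z1 z2 ss1 ss2 : size ss1 = size z1 ->
  run w (z1 ++ z2) (ss1 ++ ss2) = run (run w z1 ss1) z2 ss2.
Proof. by move=> sz; rewrite /run zip_cat // foldl_cat. Qed.

Lemma op_free w v s : in_W e w -> supp s -> ~~ has (e v) w -> op w v s = rcons w v.
Proof. by move=> w_W /supp_pref s_pref; case: (op_adm v w_W s_pref) => + _; apply. Qed.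

Lemma op_match w v s : in_W e w -> supp s -> has (e v) w ->
  exists2 k, k < size w & e (nth v w k) v /\ op w v s = take k w ++ drop k.+1 w.
Proof. by move=> w_W /supp_pref s_pref; case: (op_adm v w_W s_pref) => _; apply. Qed.

Lemma in_W_op w v s : in_W e w -> supp s -> in_W e (op w v s).
Proof.
move=> w_W s_supp; have [adj|free] := boolP (has (e v) w).
  by have [k _ [_ ->]] := op_match w_W s_supp adj; apply: in_W_take_drop.
by rewrite op_free //; apply: in_W_rcons.
Qed.

Lemma odd_size_op w v s : in_W e w -> supp s -> odd (size (op w v s)) = ~~ odd (size w).
Proof.
move=> w_W s_supp; have [adj|free] := boolP (has (e v) w).
  have [k k_lt [_ ->]] := op_match w_W s_supp adj.
  by rewrite size_cat size_take size_drop k_lt -[in RHS](subnKC k_lt) addSn /= negbK.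
by rewrite op_free // size_rcons.
Qed.

Lemma odd_size_run w z ss : in_W e w -> size ss = size z -> List.Forall supp ss ->
  odd (size (run w z ss)) = odd (size w + size z).
Proof.
elim: z w ss => [|v z IH] w [|s ss] // w_W; first by rewrite addn0.
case=> sz /List.Forall_cons_iff[s_supp ss_supp].
by rewrite run_cons (IH _ _ (in_W_op _ w_W s_supp)) // oddD odd_size_op // addnS /= oddD addNb.
Qed.

Lemma run_in_W w u ss : in_W e (w ++ u) -> size ss = size u -> List.Forall supp ss ->
  run w u ss = w ++ u.
Proof.
elim: u w ss => [|v u IH] w [|s ss] //; first by rewrite cats0.
move=> /in_W_mem wu_W [sz] /List.Forall_cons_iff[s_supp ss_supp].
have w_W : in_W e w.
  by apply/in_W_mem => i j iw jw; apply: wu_W; rewrite mem_cat ?iw ?jw.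
have free : ~~ has (e v) w.
  by apply/hasPn => i iw; rewrite e_sym; apply: wu_W; rewrite !mem_cat ?iw ?mem_head ?orbT.
rewrite run_cons op_free // IH -?cats1 -?catA //.
exact/in_W_mem.
Qed.

Lemma perm_run_feed y K w ss : in_W e w -> count (e y) w <= K ->
  size ss = K -> List.Forall supp ss -> perm_eq (run w (nseq K y) ss) (feed y K w).
Proof.
elim: K w ss => [|K IH] w [|s ss] // w_W cnt_w.
  by rewrite feed_free ?cats0 // -count_eq0 -leqn0.
case=> sz /List.Forall_cons_iff[s_supp ss_supp]; rewrite run_cons.
have [adj|free] := boolP (has (e y) w).
  have [k k_lt [e_ay ->]] := op_match w_W s_supp adj.
  set a := nth y w k; set w' := take k w ++ drop k.+1 w.
  have w_perm : perm_eq w (a :: w').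
    by rewrite -[w in perm_eq w](cat_take_drop k) (drop_nth y k_lt) (perm_catCA _ [:: a]).
  have e_ya : e y a by rewrite e_sym.
  have cnt_w' : count (e y) w = (count (e y) w').+1 by rewrite (permP w_perm) /= e_ya.
  have cnt_w'K : count (e y) w' <= K by lia.
  apply: perm_trans (IH _ _ (in_W_take_drop _ w_W) cnt_w'K sz ss_supp) _.
  by rewrite -(feed_adj K w' e_ya) feed_perm // perm_sym.
have free' : ~~ has (e y) (rcons w y) by rewrite has_rcons e_irr.
have cnt_rcons : count (e y) (rcons w y) <= K by rewrite (eqP (_ : count _ _ == 0)) ?count_eq0.
rewrite op_free //; apply: perm_trans (IH _ _ (in_W_rcons w_W free) cnt_rcons sz ss_supp) _.
by rewrite !feed_free // -cats1 -catA.
Qed.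

Lemma run_pile y v n j ss : e y v -> j <= n -> size ss = j -> List.Forall supp ss ->
  run (nseq n v) (nseq j y) ss = nseq (n - j) v.
Proof.
move=> e_yv; elim: j n ss => [|j IH] n [|s ss] // j_n; first by rewrite subn0.
case=> sz /List.Forall_cons_iff[s_supp ss_supp].
have adj : has (e y) (nseq n v) by rewrite has_nseq e_yv andbT; lia.
rewrite run_cons; have [k k_lt [_ ->]] := op_match (in_W_nseq _ _) s_supp adj.
rewrite size_nseq in k_lt.
rewrite take_nseq ?(ltnW k_lt) // drop_nseq -nseqD IH //; first by congr nseq; lia.
lia.
Qed.

Definition steers (z A B : seq T) := forall w ss, perm_eq w A ->
  size ss = size z -> List.Forall supp ss -> perm_eq (run w z ss) B.

Lemma steers_nil A : steers [::] A A.
Proof. by move=> w [|s ss]. Qed.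

Lemma steers_cat z1 z2 A B C : steers z1 A B -> steers z2 B C -> steers (z1 ++ z2) A C.
Proof.
move=> st1 st2 w ss wA; rewrite size_cat => sz.
rewrite -(cat_take_drop (size z1) ss) => /List.Forall_app[ss1 ss2].
have sz1 : size (take (size z1) ss) = size z1 by rewrite size_takel // sz leq_addr.
by rewrite run_cat //; apply: st2 => //; [apply: st1 | rewrite size_drop sz addKn].
Qed.

Lemma steers_feed y K A : in_W e A -> count (e y) A <= K ->
  steers (nseq K y) A (feed y K A).
Proof.
move=> A_W cnt w ss wA; rewrite size_nseq => sz ss_supp.
have cnt_w : count (e y) w = count (e y) A by apply/permP.
apply: (perm_trans _ (feed_perm y K wA)); apply: perm_run_feed; rewrite ?cnt_w //.
by apply: in_W_perm A_W; rewrite perm_sym.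
Qed.

Lemma steers_pile y v n j : e y v -> j <= n ->
  steers (nseq j y) (nseq n v) (nseq (n - j) v).
Proof.
move=> e_yv j_n w ss wA; rewrite size_nseq => sz ss_supp.
have -> : w = nseq n v.
  have <- : size w = n by rewrite (perm_size wA) size_nseq.
  by apply/all_pred1P; rewrite (eq_all_r (perm_mem wA)) all_pred1_nseq.
by rewrite run_pile.
Qed.

Definition reach (A B : seq T * seq T) :=
  exists z, steers z A.1 B.1 /\ steers z A.2 B.2.

Lemma reach_refl A : reach A A.
Proof. by exists [::]; split; apply: steers_nil. Qed.

Lemma reach_trans A B C : reach A B -> reach B C -> reach A C.
Proof.
move=> [z1 [st1 st2]] [z2 [st1' st2']].
by exists (z1 ++ z2); split; apply: steers_cat; eassumption.
Qed.

Lemma reach_swap A B : reach A B -> reach (A.2, A.1) (B.2, B.1).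
Proof. by case=> z [st1 st2]; exists z. Qed.

Lemma reach_feed y K A : in_W e A.1 -> in_W e A.2 ->
  count (e y) A.1 <= K -> count (e y) A.2 <= K -> reach A (feed y K A.1, feed y K A.2).
Proof. by move=> *; exists (nseq K y); split; apply: steers_feed. Qed.

Definition feed_pair y (A : seq T * seq T) :=
  (feed y (maxn (count (e y) A.1) (count (e y) A.2)) A.1,
   feed y (maxn (count (e y) A.1) (count (e y) A.2)) A.2).

Definition good_pair (A : seq T * seq T) := [/\ in_W e A.1, in_W e A.2,
  {in A.1, forall x, x \notin A.2} & ~~ odd (size A.1 + size A.2)].

Lemma reach_feed_pair y A : good_pair A -> reach A (feed_pair y A).
Proof. by case=> A1_W A2_W _ _; apply: reach_feed; rewrite ?leq_maxl ?leq_maxr. Qed.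

Lemma good_pair_feed y A : good_pair A -> good_pair (feed_pair y A).
Proof.
case: A => A1 A2 [/= A1_W A2_W disj even]; rewrite /feed_pair /=.
set K := maxn _ _.
have c1K : count (e y) A1 <= K := leq_maxl _ _.
have c2K : count (e y) A2 <= K := leq_maxr _ _.
split=> /=; [exact: in_W_feed.. | |].
  move=> x; rewrite !mem_feed; have [->|_] := eqVneq x y; last first.
    by rewrite /= !orbF => /andP[/disj/negbTE-> _].
  rewrite e_irr /= !andbT => /orP[yA1|c1_lt]; apply/negP => /orP[yA2|c2_lt].
  - by move: (disj _ yA1); rewrite yA2.
  - by move: (count_adj_in_W A1_W yA1) c2_lt; rewrite /K; lia.
  - by move: (count_adj_in_W A2_W yA2) c1_lt; rewrite /K; lia.
  - by move: c1_lt c2_lt; rewrite /K; lia.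
have := size_feed c1K; have := size_feed c2K; rewrite -!addnn => E2 E1.
have E : size (feed y K A1) + size (feed y K A2) +
         (count (e y) A1 + count (e y) A2).*2 = size A1 + size A2 + K.*2.
  by rewrite -!addnn; lia.
by move/(congr1 odd): E; rewrite oddD [in RHS]oddD !odd_double !addbF => ->.
Qed.

Definition occ (A : seq T * seq T) : {set T} := [set x | (x \in A.1) || (x \in A.2)].

Lemma occ_feed_pair y A :
  occ (feed_pair y A) \subset (occ A :\: [set v | e y v]) :|: [set y].
Proof.
apply/subsetP => x; rewrite !inE /= !mem_feed.
case: (x == y); rewrite ?orbT //= !orbF.
by case/orP=> /andP[-> ->]; rewrite ?orbT.
Qed.

Lemma reach_smaller_occ x p A : good_pair A -> x \in occ A -> path e x p ->
  last x p \in occ A -> x != last x p ->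
  exists B, [/\ reach A B, good_pair B & #|occ B| < #|occ A|].
Proof.
elim: p x A => [|y p IH] x A A_good xA /=; first by rewrite eqxx.
case/andP=> e_xy yp zA xz; set B := feed_pair y A; set N := [set v | e y v].
have AB : reach A B := reach_feed_pair y A_good.
have B_good : good_pair B := good_pair_feed y A_good.
have xN : x \in occ A :&: N by rewrite in_setI xA inE e_sym.
have yN : y \notin N by rewrite inE e_irr.
have bound := card_sub_setDU1 (occ_feed_pair y A) yN; rewrite -/B -/N in bound.
have [lt_BA|le_AB] := ltnP #|occ B| #|occ A|; first by exists B.
have N0 : 0 < #|occ A :&: N| by apply/card_gt0P; exists x.
have /andP[yB yA] : (y \in occ B) && (y \notin occ A).
  by move: bound; case: (_ && _) => //=; clear -le_AB N0; lia.
(* The step to y has only replaced x by the new letter y, so z survives. *)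
have zN : last y p \notin N.
  apply: contraTN le_AB => zN; rewrite -ltnNge.
  have sub2 : [set x; last y p] \subset occ A :&: N.
    by rewrite subUset !sub1set xN inE zA.
  by move: (subset_leq_card sub2) bound; rewrite cards2 xz yB yA /=; clear -N0; lia.
have zy : y != last y p by apply: contraNneq yA => ->.
have zB : last y p \in occ B.
  by move: zA zN; rewrite !inE /= !mem_feed => /orP[]-> ->; rewrite ?orbT.
have le_BA : #|occ B| <= #|occ A| by move: bound; rewrite yB yA /=; clear -N0; lia.
have [C [BC C_good lt_CB]] := IH y B B_good yB yp zB zy.
by exists C; split => //; [apply: reach_trans AB BC | apply: leq_trans lt_CB le_BA].
Qed.

Lemma reach_single_occ A : connected_graph e -> good_pair A ->
  exists B, [/\ reach A B, good_pair B & #|occ B| <= 1].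
Proof.
move=> conn_e; have [n] := ubnP #|occ A|; elim: n A => // n IH A occ_n A_good.
have [le1|/card_gt1P[x [z [xA zA xz]]]] := leqP #|occ A| 1.
  by exists A; split=> //; apply: reach_refl.
case/connectP: (conn_e x z) => p xp lz; rewrite lz in zA xz.
have [B [AB B_good lt_BA]] := reach_smaller_occ A_good xA xp zA xz.
have [|C [BC C_good C1]] := IH B _ B_good; first lia.
by exists C; split => //; apply: reach_trans AB BC.
Qed.

Lemma single_occ_pile (v0 : T) B : good_pair B -> #|occ B| <= 1 ->
  exists v a, ~~ odd a /\ (B = (nseq a v, [::]) \/ B = ([::], nseq a v)).
Proof.
case: B => B1 B2 [/= _ _ disj even] /card_le1_eqP occ1.
set v := head v0 (B1 ++ B2).
have eq_v x : x \in B1 ++ B2 -> x = v.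
  move=> xB; apply: occ1; rewrite inE -mem_cat //.
  by move: xB; rewrite /v; case: (B1 ++ B2) => //= y s _; rewrite mem_head.
have B1v : B1 = nseq (size B1) v.
  by apply/all_pred1P/allP => x xB1; apply/eqP/eq_v; rewrite mem_cat xB1.
have B2v : B2 = nseq (size B2) v.
  by apply/all_pred1P/allP => x xB2; apply/eqP/eq_v; rewrite mem_cat xB2 orbT.
exists v, (size B1 + size B2); split => //.
case: (posnP (size B1)) => [/size0nil B1nil|B1_gt0]; [right|left].
  by rewrite B1nil /= {1}B2v.
have vB1 : v \in B1 by rewrite B1v mem_nseq B1_gt0 eqxx.
have /size0nil B2nil : size B2 = 0.
  apply/eqP; apply: contraNT (disj _ vB1); rewrite -lt0n => B2_gt0.
  by rewrite B2v mem_nseq B2_gt0 eqxx.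
by rewrite B2nil addn0 {1}B1v.
Qed.

Lemma reach_pile_adj a v y : e y v -> reach (nseq a v, [::]) ([::], nseq a y).
Proof.
move=> e_yv; have := @reach_feed y a (nseq a v, [::]) (in_W_nseq a v) in_W_nil.
by rewrite /= count_nseq e_yv mul1n feed_nseq e_yv subnn feed_nil; apply.
Qed.

Lemma reach_nil_pile_connect a v y : connect e v y ->
  reach (nseq a y, [::]) ([::], [::]) -> reach (nseq a v, [::]) ([::], [::]).
Proof.
case/connectP=> p; elim: p v => [|w p IH] v /=; first by move=> _ ->.
case/andP=> e_vw wp /(IH w wp) w_nil y_nil.
by apply: reach_trans (reach_pile_adj a (_ : e w v)) (reach_swap (w_nil y_nil)); rewrite e_sym.
Qed.

Lemma reach_pile_split b v y : e y v ->
  reach (nseq (b + b) v, [::]) (nseq b v, nseq b y).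
Proof.
move=> e_yv; exists (nseq b y); split=> /=.
  by have := steers_pile e_yv (leq_addr b b); rewrite addnK.
by have := @steers_feed y b [::] in_W_nil (leq0n _); rewrite feed_nil.
Qed.

(* A pile of b letters p0 stays on the right while a pile of b letters a walks
   along the cycle, changing side at every step. *)
Definition two_piles b (p0 : T) (f : bool) (a : T) : seq T * seq T :=
  if f then (nseq b a, nseq b p0) else ([::], nseq b p0 ++ nseq b a).

Lemma reach_two_piles_step b p0 f a y : e a y -> ~~ e y p0 -> (~~ f -> ~~ e p0 a) ->
  reach (two_piles b p0 f a) (two_piles b p0 (~~ f) y).
Proof.
move=> e_ay yp0 fp0; have e_ya : e y a by rewrite e_sym.
case: f fp0 => [_|/(_ isT) p0a] /=.
  have := @reach_feed y b (nseq b a, nseq b p0) (in_W_nseq _ _) (in_W_nseq _ _).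
  rewrite /= !count_nseq e_ya (negbTE yp0) mul1n mul0n !feed_nseq e_ya (negbTE yp0).
  by rewrite subnn; apply.
have piles_W : in_W e (nseq b p0 ++ nseq b a).
  by have := in_W_feed a b (in_W_nseq b p0); rewrite feed_nseq e_sym (negbTE p0a).
have := @reach_feed y b ([::], nseq b p0 ++ nseq b a) in_W_nil piles_W.
rewrite /= count_cat !count_nseq e_ya (negbTE yp0) mul1n mul0n feed_nil feed_cat.
by rewrite filter_nseq count_nseq /= (negbTE yp0) mul1n subn0 feed_nseq e_ya subnn cats0; apply.
Qed.

Lemma reach_two_piles_path b p0 r f a : (~~ f -> ~~ e p0 a) -> path e a r ->
  all (fun w => ~~ e w p0) r ->
  reach (two_piles b p0 f a) (two_piles b p0 (f (+) odd (size r)) (last a r)).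
Proof.
elim: r f a => [|y r IH] f a fp0 /=; first by rewrite addbF => _ _; apply: reach_refl.
case/andP=> e_ay yr /andP[yp0 r_p0].
apply: reach_trans (reach_two_piles_step b e_ay yp0 fp0) _.
by rewrite addbN -addNb; apply: IH; rewrite // e_sym.
Qed.

Lemma reach_nil_pile_cycle b p0 p1 r x : pinned_odd_cycle e p0 p1 r x ->
  reach (nseq (b + b) p1, [::]) ([::], [::]).
Proof.
case=> /andP[e01 p1r] e_lx e_x0 even_r r_p0.
apply: reach_trans (reach_pile_split b e01) _.
apply: reach_trans (@reach_two_piles_path b p0 r true p1 _ p1r r_p0) _ => //.
rewrite /two_piles /= (negbTE even_r).
have e_xl : e x (last p1 r) by rewrite e_sym.
have := @reach_feed x b (nseq b (last p1 r), nseq b p0) (in_W_nseq _ _) (in_W_nseq _ _).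
by rewrite /= !count_nseq e_xl e_x0 mul1n !feed_nseq e_xl e_x0 subnn; apply.
Qed.

Lemma reach_nil_good_pair A p0 p1 r x : connected_graph e ->
  pinned_odd_cycle e p0 p1 r x -> good_pair A -> reach A ([::], [::]).
Proof.
move=> conn_e cyc A_good.
have [B [AB B_good occ_B]] := reach_single_occ conn_e A_good.
have [v [a [even_a B_pile]]] := single_occ_pile p0 B_good occ_B.
have pile_nil : reach (nseq a v, [::]) ([::], [::]).
  rewrite -(odd_double_half a) (negbTE even_a) add0n -addnn.
  exact: reach_nil_pile_connect (conn_e v p1) (reach_nil_pile_cycle _ cyc).
apply: reach_trans AB _; case: B_pile => ->; first exact: pile_nil.
exact: reach_swap pile_nil.
Qed.

End Matching.

Theorem mainTheorem8 (T : finType) (e : rel T)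
    (op : seq T -> T -> pref T -> seq T) (supp : pref T -> Prop) :
  simple_graph e -> connected_graph e -> ~ bipartite e ->
  (forall s, supp s -> is_pref e s) -> (exists s, supp s) ->
  admissible e op -> subadditive op supp ->
  forall u : seq T, in_W e u -> ~~ odd (size u) ->
  exists z : seq T, ~~ odd (size z) /\
    forall (s' s : seq (pref T)),
      size s' = size z -> List.Forall supp s' ->
      size s = size u -> List.Forall supp s ->
      Q op z s' = [::] /\ Q op (u ++ z) (s ++ s') = [::].
Proof.
move=> [e_sym e_irr] conn_e nbip supp_pref [s0 s0_supp] op_adm _ u u_W even_u.
have [c /andP[c_cycle odd_c]] := odd_cycle_of_nonbipartite e_sym conn_e nbip.
have [p0 [p1 [r [x cyc]]]] := pinned_odd_cycle_of_cycle e_sym e_irr c_cycle odd_c.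
have u_good : good_pair e (u, [::]) by split; rewrite //= addn0.
have [z [/= st_u st_nil]] :=
  reach_nil_good_pair e_sym e_irr supp_pref op_adm conn_e cyc u_good.
have Q_z ss : size ss = size z -> List.Forall supp ss -> Q op z ss = [::].
  by move=> sz ss_supp; apply/perm_nilP/st_nil.
exists z; split.
  have sz0 : size (nseq (size z) s0) = size z by rewrite size_nseq.
  have ss0 : List.Forall supp (nseq (size z) s0) by elim: (size z) => //= n; constructor.
  have := odd_size_run e_sym e_irr supp_pref op_adm (@in_W_nil T e) sz0 ss0.
  by rewrite /run -/(Q op z _) Q_z // => <-.
move=> s' s sz' s'_supp sz s_supp; split; first exact: Q_z.
rewrite /Q -/(run op [::] _ _) run_cat // [run _ [::] u s](run_in_W e_sym supp_pref op_adm) //.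
by apply/perm_nilP; apply: st_u.
Qed.
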